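(* Let $\mathcal{G}$ be a dynamic multigraph with finite vertex set $\mathcal{V}$ and finite edge set $\mathcal{E}$, and let $\mathcal{L}_{\mathcal{G}}$ be its increment-weighted line graph and $\mathcal{L}^*_{\mathcal{G}}=\bigcup_{i\in\mathcal{V}}\mathcal{M}_{\mathcal{G}}(i)$ its line graph skeleton, both as defined in the context. Then the weighted connectivities of $\mathcal{L}_{\mathcal{G}}$ and $\mathcal{L}^*_{\mathcal{G}}$ are equivalent: for every threshold $\omega\in\mathbb{R}$, $\mathrm{comps}(\mathcal{L}^*_{\mathcal{G}},\omega)=\mathrm{comps}(\mathcal{L}_{\mathcal{G}},\omega)$.
   Context: A dynamic multigraph $\mathcal{G}(\mathcal{V},\mathcal{E},\mathcal{T})$ consists of a finite vertex set $\mathcal{V}$ and a finite set $\mathcal{E}$ of directed timestamped edges $e_r=(i_r,j_r,t_r)$ with $i_r,j_r\in\mathcal{V}$, $i_r\neq j_r$ (no self loops), $t_r\in\mathcal{T}=[0,T]$; several edges may join the same ordered pair at different times, timestamps may tie across edges, and no two edges agree in both ordered vertex pair and timestamp. For $i\in\mathcal{V}$, $\mathcal{E}^{(in)}_i=\{e_r\in\mathcal{E}: j_r=i\}$, $\mathcal{E}^{(out)}_i=\{e_r\in\mathcal{E}: i_r=i\}$, $\mathcal{E}_i=\mathcal{E}^{(in)}_i\cup\mathcal{E}^{(out)}_i$. Increment-weighted line graph $\mathcal{L}_{\mathcal{G}}$: its vertex set is $\mathcal{E}$; for $e_r,e_s\in\mathcal{E}$ there is a directed edge $(e_r,e_s)$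 with weight $w_{rs}=t_s-t_r$ if and only if $j_r=i_s$ (tip-to-tail) and $t_r\le t_s$. Line graph skeleton: for each $i\in\mathcal{V}$, the set $\mathcal{M}_{\mathcal{G}}(i)$ is produced as follows. Sort $\mathcal{E}_i$ by timestamp, with incoming edges placed before outgoing edges when timestamps are equal. Start with an empty list $W$ and an empty output. Process the edges of $\mathcal{E}_i$ in sorted order: if the current edge $e_j$ is incoming to $i$, append it to $W$; if it is outgoing from $i$, then for every $e_k\in W$ add the pair $(e_k,e_j)$ to the output, and then replace $W$ by the one-element list consisting of the last element of $W$ (leaving $W$ empty if it was empty). Each output pair $(e_k,e_j)$ is an edge with weight $t_j-t_k$. $\mathcal{L}^*_{\mathcal{G}}$ is the weighted graph on vertex set $\mathcal{E}$ whose edge set is the union over all $i\in\mathcal{V}$ of these outputs. Weight-filtered connected components: for a weighted graph $\mathcal{H}$ and threshold $\omega$, $\mathrm{comps}(\mathcal{H},\omega)$ is the set of connected components (ignoring edge directions) of the graph on the same vertex set that keeps only the edges of weight $\le\omega$. Two weighted graphs on the same vertex set have equivalent weighted connectivities if their weight-filtered connected components coincide for every $\omega$. *)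

From HB Require Import structures.
From mathcomp Require Import all_boot all_order all_algebra.
From mathcomp Require Import reals.
Set Implicit Arguments. Unset Strict Implicit. Unset Printing Implicit Defensive.
Import Order.TTheory GRing.Theory Num.Theory.
Local Open Scope ring_scope.

Section Dyn.
Variables (R : realType) (V E : finType).
Variables (src tgt : E -> V) (time : E -> R).

Definition filtered (adj : rel E) (wt : E -> E -> R) (om : R) : rel E :=
  fun e f => adj e f && (wt e f <= om).
Definition symc (a : rel E) : rel E := fun x y => a x y || a y x.
Definition comps (a : rel E) : {set {set E}} :=
  [set [set y | connect (symc a) x y] | x : E].

Definition incr (e f : E) : R := time f - time e.

Definition line_adj : rel E :=
  fun e f => (tgt e == src f) && (time e <= time f).

Definition incident (i : V) : seq E :=
  [seq e <- enum E | (src e == i) || (tgt e == i)].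

(* Order used for sorting E_i: by timestamp, incoming before outgoing on ties. *)
Definition skel_le (i : V) : rel E :=
  fun e f => (time e < time f) ||
             ((time e == time f) && ((tgt e == i) || (tgt f != i))).

Definition valid_order (i : V) (s : seq E) : Prop :=
  perm_eq s (incident i) /\ sorted (skel_le i) s.

(* The skeleton procedure at vertex i, run on the sorted list s with
   current list W; returns the output pairs. [drop (size W).-1 W] is the
   one-element list of the last element of W (empty if W is empty). *)
Fixpoint skel_run (i : V) (W : seq E) (s : seq E) : seq (E * E) :=
  match s with
  | [::] => [::]
  | e :: s' =>
      if tgt e == i then skel_run i (rcons W e) s'
      else [seq (k, e) | k <- W] ++ skel_run i (drop (size W).-1 W) s'
  end.

(* Edge relation of the line graph skeleton (union over i of M_G(i)),
   given a choice of valid sorted order for each vertex. *)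
Definition skel_adj (ord : V -> seq E) : rel E :=
  fun e f => [exists i : V, (e, f) \in skel_run i [::] (ord i)].

End Dyn.

From HB Require Import structures.
From mathcomp Require Import all_boot all_order all_algebra.
From mathcomp Require Import reals.
Set Implicit Arguments. Unset Strict Implicit. Unset Printing Implicit Defensive.
Import Order.TTheory GRing.Theory Num.Theory.
Local Open Scope ring_scope.

(* Every pair output at a vertex i joins an incoming edge to a later outgoing
   one, so the skeleton is a subgraph of the line graph with the same weights.
   Conversely, let (e, f) be a line-graph edge through i = tgt e and scan the
   sorted list E_i from e to f.  Each outgoing edge a met on the way is joined
   to everything waiting, in particular to the current representative x of e
   and to the last incoming edge l, after which l becomes the representative.
   Since t_x <= t_l <= t_a <= t_f, every increment used is at most t_f - t_e,
   so e and f are connected in the skeleton at every threshold at which they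
   are adjacent in the line graph. *)

Section Components.
Variable E : finType.

Lemma symc_sym (a : rel E) : symmetric (symc a).
Proof. by move=> x y; rewrite /symc orbC. Qed.

Lemma connect_symc1 (a : rel E) : subrel a (connect (symc a)).
Proof. by move=> x y axy; apply: connect1; rewrite /symc axy. Qed.

Lemma connect_symc_sub (a b : rel E) :
  subrel a (connect (symc b)) -> subrel (connect (symc a)) (connect (symc b)).
Proof.
move=> ab; apply: connect_sub => x y /orP[/ab // | /ab].
by rewrite sym_connect_sym //; exact: symc_sym.
Qed.

Lemma connect_symc_mono (a b : rel E) :
  subrel a b -> subrel (connect (symc a)) (connect (symc b)).
Proof. by move=> ab; apply: connect_symc_sub => x y /ab/connect_symc1. Qed.

Lemma comps_eq (a b : rel E) :
  subrel a (connect (symc b)) -> subrel b (connect (symc a)) ->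
  comps a = comps b.
Proof.
move=> ab ba; apply: eq_imset => x; apply/setP => y; rewrite !inE.
by apply/idP/idP; apply: connect_symc_sub.
Qed.

Lemma filtered_mono (R : realType) (a b : rel E) (wt : E -> E -> R) om :
  subrel a b -> subrel (filtered a wt om) (filtered b wt om).
Proof. by move=> ab x y /andP[/ab ab_xy le_xy]; rewrite /filtered ab_xy. Qed.

Definition pairs_rel (S : seq (E * E)) : rel E := fun x y => (x, y) \in S.

End Components.

Section SkeletonRun.
Variables (R : realType) (V E : finType) (tgt : E -> V) (time : E -> R).
Variable i : V.

Definition time_le : rel E := fun x y => time x <= time y.

Lemma time_le_trans : transitive time_le.
Proof. by move=> y x z; exact: le_trans. Qed.

Lemma skel_le_time_le : subrel (skel_le tgt time i) time_le.
Proof. by move=> x y /orP[/ltW // | /andP[/eqP xy _]]; rewrite /time_le xy. Qed.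

Lemma skel_le_trans : transitive (skel_le tgt time i).
Proof.
move=> y x z; rewrite /skel_le.
case/orP => [xy | /andP[/eqP exy xy]]; case/orP => [yz | /andP[/eqP eyz yz]].
- by rewrite (lt_trans xy yz).
- by rewrite -eyz xy.
- by rewrite exy yz.
rewrite exy eyz eqxx ltxx /=.
case: (tgt y == i) xy yz => /= [xy _ | _ ->]; last by rewrite orbT.
by rewrite orbF in xy; rewrite xy.
Qed.

Lemma mem_skel_run W s k g :
  (k, g) \in skel_run tgt i W s ->
  all (fun x => tgt x == i) W -> sorted time_le (W ++ s) ->
  [&& tgt k == i, tgt g != i, g \in s & time k <= time g].
Proof.
elim: s W => [// | a s IH] W /=.
have in_tail W' : (k, g) \in skel_run tgt i W' s ->
    all (fun x => tgt x == i) W' -> sorted time_le (W' ++ s) ->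
    [&& tgt k == i, tgt g != i, g \in a :: s & time k <= time g].
  move=> kg inW sortWs; case/and4P: (IH W' kg inW sortWs) => -> -> gs ->.
  by rewrite inE gs orbT.
case: ifP => ia.
  by move=> /in_tail hyp inW; rewrite -cat_rcons; apply: hyp; rewrite all_rcons ia.
rewrite mem_cat => /orP[/mapP[x xW [-> ->]] | /in_tail hyp] inW sortWs.
  move: sortWs; rewrite sorted_pairwise ?pairwise_cat; last exact: time_le_trans.
  case/and3P=> [/allrelP/(_ x a xW (mem_head _ _)) xa _ _].
  by rewrite (allP inW) // ia mem_head.
apply: hyp.
- by apply/allP => x /mem_drop xW; exact: (allP inW).
- apply: subseq_sorted time_le_trans _ _ _ sortWs.
  by rewrite cat_subseq ?drop_subseq ?subseq_cons.
Qed.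

Lemma skel_run_cat W s1 s2 :
  exists W', {subset skel_run tgt i W' s2 <= skel_run tgt i W (s1 ++ s2)}.
Proof.
elim: s1 W => [| a s1 IH] W /=; first by exists W.
case: ifP => _; first exact: IH.
have [W' sub] := IH (drop (size W).-1 W); exists W' => p /sub.
by rewrite mem_cat orbC => ->.
Qed.

Lemma incoming_before_outgoing s e f :
  sorted (skel_le tgt time i) s -> e \in s -> f \in s ->
  tgt e == i -> tgt f != i -> time e <= time f ->
  exists s1 s2, s = s1 ++ e :: s2 /\ f \in s2.
Proof.
move=> sorted_s es fs ei fi ef.
case/splitPr: es sorted_s fs => s1 s2 sorted_s fs; exists s1, s2; split=> //.
move: fs; rewrite mem_cat inE => /or3P[fs1 | /eqP fe | //].
  move: sorted_s; rewrite sorted_pairwise ?pairwise_cat; last exact: skel_le_trans.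
  case/and3P=> [/allrelP/(_ f e fs1 (mem_head _ _))].
  by rewrite /skel_le ltNge ef (negbTE fi) ei andbF.
by move: fi; rewrite fe ei.
Qed.

Variable om : R.

Local Notation linked S := (connect (symc (filtered (pairs_rel S) (incr time) om))).

Lemma skel_run_connect W s x f :
  x \in W -> sorted time_le [:: x, last x W & s] -> f \in s -> tgt f != i ->
  incr time x f <= om -> linked (skel_run tgt i W s) x f.
Proof.
elim: s W x => [// | a s IH] W x xW /and3P[xl la sorted_as] fs fi xf /=.
case: ifP => ia.
  have {}fs : f \in s by move: fs; rewrite inE => /predU1P[fa | //]; rewrite fa ia in fi.
  apply: IH => //; first by rewrite mem_rcons inE xW orbT.
  by rewrite last_rcons /= (time_le_trans xl la).
case/lastP: W xW xl la => [// | W l] xW.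
rewrite last_rcons size_rcons /= -cats1 drop_size_cat // cats1 => xl la.
set S := _ ++ _.
have af : time a <= time f.
  case/predU1P: fs => [-> // | fs].
  exact: (allP (order_path_min time_le_trans sorted_as)).
have edge k : k \in rcons W l -> time x <= time k ->
    symc (filtered (pairs_rel S) (incr time) om) k a.
  move=> kW xk; rewrite /symc /filtered /pairs_rel mem_cat map_f //=.
  by rewrite (le_trans _ xf) // /incr lerB.
have xa := connect1 (edge x xW (lexx _)).
case/predU1P: fs => [-> // | fs].
have al : linked S a l.
  by apply: connect1; rewrite symc_sym; apply: edge; rewrite ?mem_rcons ?mem_head.
have lf : linked (skel_run tgt i [:: l] s) l f.
  apply: IH => //=; first exact: mem_head.
    by rewrite /time_le lexx (path_le time_le_trans la sorted_as).
  by apply: le_trans xf; rewrite /incr lerB.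
apply: connect_trans xa (connect_trans al _).
apply: connect_symc_mono lf; apply: filtered_mono => u v uv.
by rewrite /pairs_rel /S mem_cat orbC [_ \in skel_run _ _ _ _]uv.
Qed.

Lemma skel_run_connect_cat W s1 e s2 f :
  tgt e == i -> sorted time_le (e :: s2) -> f \in s2 -> tgt f != i ->
  incr time e f <= om -> linked (skel_run tgt i W (s1 ++ e :: s2)) e f.
Proof.
move=> ei sorted_es2 fs2 fi ef.
have [W' sub] := skel_run_cat W s1 (e :: s2).
apply: connect_symc_mono (_ : linked (skel_run tgt i W' (e :: s2)) e f).
  by apply: filtered_mono => u v /sub.
rewrite /= ei; apply: skel_run_connect => //; first by rewrite mem_rcons mem_head.
by rewrite last_rcons /= /time_le lexx.
Qed.

End SkeletonRun.

Section LineGraphSkeleton.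
Variables (R : realType) (V E : finType) (src tgt : E -> V) (time : E -> R).
Variable ord : V -> seq E.
Hypothesis ord_valid : forall i, valid_order src tgt time i (ord i).
Variable om : R.

Lemma mem_ord i e : (e \in ord i) = (src e == i) || (tgt e == i).
Proof. by rewrite (perm_mem (ord_valid i).1) mem_filter mem_enum andbT. Qed.

Lemma sorted_ord_time_le i : sorted (time_le time) (ord i).
Proof. exact: sub_sorted (@skel_le_time_le _ _ _ tgt time i) _ (ord_valid i).2. Qed.

Lemma skel_adj_line_adj :
  subrel (filtered (skel_adj tgt ord) (incr time) om)
         (filtered (line_adj src tgt time) (incr time) om).
Proof.
move=> k g /andP[/existsP[i kg] kg_om]; rewrite /filtered kg_om andbT.
have /and4P[/eqP ki gi gs kg_time] := mem_skel_run kg isT (sorted_ord_time_le i).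
by move: gs; rewrite mem_ord (negbTE gi) orbF /line_adj ki eq_sym => ->.
Qed.

Hypothesis no_loop : forall e, src e != tgt e.

Lemma line_adj_skel_connect :
  subrel (filtered (line_adj src tgt time) (incr time) om)
         (connect (symc (filtered (skel_adj tgt ord) (incr time) om))).
Proof.
move=> e f /andP[/andP[/eqP ef ef_time] ef_om].
set i := tgt e.
have fi : tgt f != i by rewrite /i ef eq_sym no_loop.
have e_ord : e \in ord i by rewrite mem_ord eqxx orbT.
have f_ord : f \in ord i by rewrite mem_ord -ef eqxx.
have [s1 [s2 [ord_i fs2]]] :=
  incoming_before_outgoing (ord_valid i).2 e_ord f_ord (eqxx i) fi ef_time.
have sorted_es2 : sorted (time_le time) (e :: s2).
  by move: (sorted_ord_time_le i); rewrite ord_i => /cat_sorted2[].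
apply: connect_symc_mono
  (skel_run_connect_cat [::] s1 (eqxx i) sorted_es2 fs2 fi ef_om).
apply: filtered_mono => u v uv.
by apply/existsP; exists i; rewrite ord_i.
Qed.

End LineGraphSkeleton.

Theorem mainTheorem1 (R : realType) (V E : finType)
    (src tgt : E -> V) (time : E -> R) (T : R)
    (Hloop : forall e, src e != tgt e)
    (Htime : forall e, 0 <= time e <= T)
    (Hdistinct : injective (fun e => (src e, tgt e, time e)))
    (ord : V -> seq E)
    (Hord : forall i, valid_order src tgt time i (ord i))
    (om : R) :
  comps (filtered (skel_adj tgt ord) (incr time) om)
  = comps (filtered (line_adj src tgt time) (incr time) om).
Proof.
apply: comps_eq => e f.
  by move/(skel_adj_line_adj Hord)/connect_symc1.
exact: line_adj_skel_connect.
Qed.
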